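(* Let $\mathcal{S}$ be a temporal feedback graph on $T$ rounds such that every neighborhood $S_t$ is contained in the union of at most $R$ orders of $\mathcal{S}$. Then $\mathsf{UB}(\mathcal{S})\le\sqrt{R}\,\mathsf{LB}(\mathcal{S})$, i.e. $\mathsf{UB}(\mathcal{S})/\mathsf{LB}(\mathcal{S})\le\sqrt{R}$.
   Context: A temporal feedback graph $\mathcal{S}$ is a collection of subsets $S_t\subseteq[T]\setminus\{t\}$, $t\in[T]$. An order is a sequence of rounds $t_1,\dots,t_w$ with $t_u\in S_{t_v}$ for all $u<v$; maximal if no super-sequence is an order; $C_1,\dots,C_N$ are the maximal orders. $\mathsf{UB}(\mathcal{S})$ is the optimal value of: minimize $\sum_{c=1}^N\sqrt{\sum_{t\in C_c}\lambda_{c,t}^2}$ subject to $\sum_c\lambda_{c,t}=1$ for all $t$, $\lambda_{c,t}=0$ if $t\notin C_c$, $\lambda_{c,t}\ge0$ (equivalently, the optimal value of: maximize $\sum_t\mu_t$ s.t. $\sum_{t\in C_c}\mu_t^2\le1$ for all $c$, $\mu\ge0$). $\mathsf{LB}(\mathcal{S})$ is the optimal value (supremum) of the lower bound program: maximize $\sum_{t=1}^T\varepsilon_t$ subject to $\sum_{t\in S_{t'}}\varepsilon_t^2\le1$ for all $t'\in[T]$ and $\varepsilon_t\ge0$. *)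

From mathcomp Require Import all_boot all_order all_algebra.
From mathcomp Require Import all_classical all_reals.
From mathcomp Require Import ereal.
Set Implicit Arguments. Unset Strict Implicit. Unset Printing Implicit Defensive.
Import Order.TTheory GRing.Theory Num.Theory.
Local Open Scope ring_scope.
Local Open Scope classical_set_scope.

(* Rounds [T] = {1,..,T} are represented by 'I_T = {0,..,T-1}.
   A temporal feedback graph is S : 'I_T -> {set 'I_T} with t \notin S t. *)
Definition temporal_feedback_graph (T : nat) (S : 'I_T -> {set 'I_T}) : Prop :=
  forall t, t \notin S t.

Definition is_order (T : nat) (S : 'I_T -> {set 'I_T}) (s : seq 'I_T) : bool :=
  pairwise (fun a b => a \in S b) s.

Definition is_maximal_order (T : nat) (S : 'I_T -> {set 'I_T}) (s : seq 'I_T)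
  : Prop :=
  is_order S s /\ forall s', is_order S s' -> subseq s s' -> s' = s.

Definition UB_feasible (K : realType) (T : nat) (S : 'I_T -> {set 'I_T})
  (mu : 'I_T -> K) : Prop :=
  (forall t, 0 <= mu t) /\
  (forall C, is_maximal_order S C -> \sum_(t <- C) mu t ^+ 2 <= 1).

Definition UB (K : realType) (T : nat) (S : 'I_T -> {set 'I_T}) : \bar K :=
  ereal_sup [set (\sum_t mu t)%:E | mu in UB_feasible S].

Definition LB_feasible (K : realType) (T : nat) (S : 'I_T -> {set 'I_T})
  (eps : 'I_T -> K) : Prop :=
  (forall t, 0 <= eps t) /\
  (forall t', \sum_(t in S t') eps t ^+ 2 <= 1).

Definition LB (K : realType) (T : nat) (S : 'I_T -> {set 'I_T}) : \bar K :=
  ereal_sup [set (\sum_t eps t)%:E | eps in LB_feasible S].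

From mathcomp Require Import all_boot all_order all_algebra.
From mathcomp Require Import all_classical all_reals.
From mathcomp Require Import ereal.
From mathcomp Require Import zify.

Set Implicit Arguments.
Unset Strict Implicit.
Unset Printing Implicit Defensive.
Import Order.TTheory GRing.Theory Num.Theory.
Local Open Scope ring_scope.

(* A UB-feasible mu satisfies sum_{t in C} mu_t^2 <= 1 on every order C, not
   only on maximal ones: orders are duplicate-free, so have length at most T,
   and hence every order extends to a maximal one.  Each neighbourhood S_t is
   covered by at most R orders, so sum_{t in S_t} mu_t^2 <= R, i.e. mu / sqrt R
   is LB-feasible, with total (sum_t mu_t) / sqrt R. *)

Lemma ler_sum_count_mem (K : numDomainType) (I : eqType) (F : I -> K)
    (s s' : seq I) :
  (forall i, 0 <= F i) ->
  (forall i, (count_mem i s <= count_mem i s')%N) ->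
  \sum_(i <- s) F i <= \sum_(i <- s') F i.
Proof.
move=> F_ge0; elim: s s' => [|x s IHs] s' count_le.
  by rewrite big_nil sumr_ge0.
have x_s' : x \in s'.
  by rewrite -has_pred1 has_count (leq_trans _ (count_le x)) //= eqxx.
rewrite (perm_big _ (perm_to_rem x_s')) !big_cons lerD2l; apply: IHs => i.
by rewrite count_mem_rem; have := count_le i; rewrite /=; case: (x == i) => /=; lia.
Qed.

Lemma ler_sum_set_seq (K : numDomainType) (I : finType) (F : I -> K)
    (A : {set I}) (s : seq I) :
  (forall i, 0 <= F i) -> {subset A <= s} ->
  \sum_(i in A) F i <= \sum_(i <- s) F i.
Proof.
move=> F_ge0 sAs; rewrite -big_enum ler_sum_count_mem // => i.
rewrite count_uniq_mem ?enum_uniq //.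
by case: (boolP (i \in enum A)) => // /[!mem_enum] /sAs; rewrite -has_pred1 has_count.
Qed.

Section Orders.

Variables (T : nat) (S : 'I_T -> {set 'I_T}).
Hypothesis S_irr : temporal_feedback_graph S.

Lemma order_uniq s : is_order S s -> uniq s.
Proof. by apply: pairwise_uniq => t; apply/negbTE/S_irr. Qed.

Lemma size_order s : is_order S s -> (size s <= T)%N.
Proof.
move=> /order_uniq s_uniq; rewrite -(card_uniqP s_uniq).
by apply: leq_trans (max_card _) _; rewrite card_ord.
Qed.

Lemma order_sub_maximal s : is_order S s ->
  exists2 C, is_maximal_order S C & subseq s C.
Proof.
have [n] := ubnP (T - size s); elim: n s => // n IHn s lt_n s_order.
have [[s' [s'_order ss' s's]] | no_ext] :=
  pselect (exists s', [/\ is_order S s', subseq s s' & s' != s]).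
  have lt_ss' : (size s < size s')%N.
    by rewrite ltn_neqAle (size_subseq ss') andbT (size_subseq_leqif ss') eq_sym.
  have [|C C_max s'C] := IHn s' _ s'_order.
    by have := size_order s'_order; lia.
  by exists C; last exact: subseq_trans s'C.
exists s => //; split => // s' s'_order ss'.
by apply/eqP/negPn/negP => s's; apply: no_ext; exists s'.
Qed.

Variable K : realType.

Lemma UB_feasible_order_le1 (mu : 'I_T -> K) c :
  UB_feasible S mu -> is_order S c -> \sum_(t <- c) mu t ^+ 2 <= 1.
Proof.
move=> [mu_ge0 mu_max] /order_sub_maximal[C /mu_max C_le1 cC].
apply: le_trans _ C_le1; apply: ler_sum_count_mem => i.
- exact: sqr_ge0.
- exact: leq_count_subseq.
Qed.

Lemma UB_feasible_cover_le (mu : 'I_T -> K) (A : {set 'I_T}) (Cs : seq (seq 'I_T)) :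
  UB_feasible S mu -> all (is_order S) Cs -> {subset A <= flatten Cs} ->
  \sum_(t in A) mu t ^+ 2 <= (size Cs)%:R.
Proof.
move=> mu_feas /allP Cs_order ACs.
apply: le_trans (ler_sum_set_seq _ ACs) _ => [t|]; first exact: sqr_ge0.
rewrite big_flatten /= -sum1_size natr_sum big_seq [leRHS]big_seq.
by apply: ler_sum => c /Cs_order; apply: UB_feasible_order_le1.
Qed.

End Orders.

Theorem theorem8 (K : realType) (T : nat) (S : 'I_T -> {set 'I_T}) (R : nat) :
  temporal_feedback_graph S ->
  (0 < R)%N ->
  (forall t : 'I_T, exists Cs : seq (seq 'I_T),
      (size Cs <= R)%N /\ all (is_order S) Cs /\
      {subset S t <= flatten Cs}) ->
  (UB K S <= (Num.sqrt (R%:R : K))%:E * LB K S)%E.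
Proof.
move=> S_irr R_gt0 S_cover; apply/ereal_supP => _ [mu mu_feas <-].
set r := Num.sqrt (R%:R : K).
have r_gt0 : 0 < r by rewrite sqrtr_gt0 ltr0n.
pose eps t := mu t / r.
have eps_feas : LB_feasible S eps.
  split=> [t|t']; first by rewrite divr_ge0 ?(ltW r_gt0) //; case: mu_feas.
  have [Cs [size_Cs [Cs_order SCs]]] := S_cover t'.
  under eq_bigr do rewrite expr_div_n.
  rewrite -mulr_suml sqr_sqrtr ?ler0n // ler_pdivrMr ?ltr0n // mul1r.
  apply: le_trans (UB_feasible_cover_le S_irr mu_feas Cs_order SCs) _.
  by rewrite ler_nat.
have -> : \sum_t mu t = r * \sum_t eps t.
  by rewrite mulr_sumr; apply: eq_bigr => t _; rewrite mulrC divfK ?gt_eqF.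
rewrite EFinM lee_wpmul2l ?lee_fin ?(ltW r_gt0) //.
by apply: ereal_sup_ubound; exists eps.
Qed.
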